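(* Let $\mathcal{M}$ be a set of mappings, $q$ a conjunctive query, and let $(q(\vec v),\Pi)=\mathrm{unf}(q,\mathcal{M})$ be its unfolding. Let $r_1,r_2\in\Pi$. If $\mathrm{head}(r_1)$ and $\mathrm{head}(r_2)$ are not unifiable, then for every database instance $\mathcal{D}$ of $\Sigma$, $(q(\vec v),\{r_1\})^{\mathcal{D}}\cap(q(\vec v),\{r_2\})^{\mathcal{D}}=\emptyset$.
   Context: A mapping is $L(\vec f(\vec x))\leftsquigarrow V(\vec x)$ with $L$ a concept or role name, $\vec f(\vec x)$ a tuple of terms each of the form $g(\vec y)$ with $g$ a function symbol and $\vec y\subseteq\vec x$ (no constants), and $V$ a view name whose extension on a database instance $\mathcal{D}$ of the schema $\Sigma$ is given by a query over $\Sigma$. Unfolding: for a CQ $q(\vec x)\leftarrow L_1(\vec v_1),\dots,L_n(\vec v_n)$ (without constants), $\mathrm{unf}(q,\mathcal{M})$ is the non-recursive Datalog query $(q_{\mathrm{unf}}(\vec x),\Pi)$ where $\Pi$ is a minimal (up to variable renaming) set of rules such that for every tuple $(m_1,\dots,m_n)$ of mappings in $\mathcal{M}$ with $m_i=L_i(\vec f_i(\vec x_i))\leftsquigarrow V_i(\vec z_i)$ and every most general unifier $\sigma$ of $\{(L_i(\vec v_i),L_i(\vec f_i(\vec x_i)))\mid1\le i\le n\}$, the rule $q_{\mathrm{unf}}(\sigma(\vec x))\leftarrow V_1(\sigma(\vec z_1)),\dots,V_n(\sigma(\vec z_n))$ is in $\Pi$. The evaluation of a Datalog query with function symbols over $\mathcal{D}$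 returns tuples of terms $f(\vec a)$ with $\vec a$ database values. $\mathrm{head}(r)$ denotes the head atom of rule $r$. *)

From Stdlib Require Import List.
Import ListNotations.
Set Implicit Arguments.

Inductive term (F : Type) : Type :=
| TVar : nat -> term F
| TFun : F -> list (term F) -> term F.
Arguments TVar {F}.

(** Ground terms built from database values and function symbols
    (the objects returned by evaluating a Datalog query with function symbols). *)
Inductive gterm (F Val : Type) : Type :=
| GVal : Val -> gterm F Val
| GFun : F -> list (gterm F Val) -> gterm F Val.
Arguments GVal {F Val}.

Fixpoint tsubst (F : Type) (s : nat -> term F) (t : term F) : term F :=
  match t with
  | TVar x => s x
  | TFun f ts => TFun f (map (tsubst s) ts)
  end.

Fixpoint teval (F Val : Type) (th : nat -> Val) (t : term F) : gterm F Val :=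
  match t with
  | TVar x => GVal (th x)
  | TFun f ts => GFun f (map (teval th) ts)
  end.

(** A mapping  L(g_1(y_1),...,g_k(y_k)) <~ V(x).
    [m_args] lists the terms g_j(y_j) (function symbol + variable list),
    [m_vars] is the variable tuple x of the view atom. *)
Record mapping (Lc F View : Type) := Mapping {
  m_pred : Lc;
  m_args : list (F * list nat);
  m_view : View;
  m_vars : list nat }.

Definition wf_mapping (Lc F View : Type) (m : mapping Lc F View) : Prop :=
  forall g ys y, In (g, ys) (m_args m) -> In y ys -> In y (m_vars m).

(** Conjunctive query q(x) <- L_1(v_1), ..., L_n(v_n)  (no constants). *)
Record cq (Lc : Type) := CQ {
  cq_head : list nat;
  cq_body : list (Lc * list nat) }.

Definition cq_var (Lc : Type) (q : cq Lc) (x : nat) : Prop :=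
  In x (cq_head q) \/ exists a, In a (cq_body q) /\ In x (snd a).

(** Non-recursive Datalog rule  q_unf(t) <- V_1(s_1), ..., V_n(s_n)
    (the head predicate is always the answer predicate q_unf). *)
Record rule (F View : Type) := Rule {
  rhead : list (term F);
  rbody : list (View * list (term F)) }.

Definition inst_args (Lc F View : Type) (m : mapping Lc F View) (rho : nat -> nat)
  : list (term F) :=
  map (fun gy => TFun (fst gy) (map (fun y => TVar (rho y)) (snd gy))) (m_args m).

Definition unifies (Lc F View : Type) (sigma : nat -> term F)
  (body : list (Lc * list nat)) (ms : list (mapping Lc F View * (nat -> nat))) : Prop :=
  Forall2 (fun a mr =>
             fst a = m_pred (fst mr) /\
             map (tsubst sigma) (map TVar (snd a)) =
             map (tsubst sigma) (inst_args (fst mr) (snd mr)))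
          body ms.

Definition is_mgu (Lc F View : Type) (sigma : nat -> term F)
  (body : list (Lc * list nat)) (ms : list (mapping Lc F View * (nat -> nat))) : Prop :=
  unifies sigma body ms /\
  forall tau, unifies tau body ms ->
    exists theta, forall x, tau x = tsubst theta (sigma x).

Definition renamed_apart (Lc F View : Type) (q : cq Lc)
  (ms : list (mapping Lc F View * (nat -> nat))) : Prop :=
  (forall i mr, nth_error ms i = Some mr ->
     (forall x y, snd mr x = snd mr y -> x = y) /\
     (forall x, ~ cq_var q (snd mr x))) /\
  (forall i j mr1 mr2, i <> j -> nth_error ms i = Some mr1 ->
     nth_error ms j = Some mr2 -> forall x y, snd mr1 x <> snd mr2 y).

(** r is one of the rules of unf(q, M): for a tuple (m_1,...,m_n) of mappings
    of M (renamed apart) and an mgu sigma, r is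
    q_unf(sigma(x)) <- V_1(sigma(z_1)), ..., V_n(sigma(z_n)).
    (Pi is a minimal set of such rules up to variable renaming, so every
    member of Pi is such a rule.) *)
Definition unf_rule (Lc F View : Type) (M : mapping Lc F View -> Prop)
  (q : cq Lc) (r : rule F View) : Prop :=
  exists (ms : list (mapping Lc F View * (nat -> nat))) (sigma : nat -> term F),
    Forall (fun mr => M (fst mr)) ms /\
    renamed_apart q ms /\
    is_mgu sigma (cq_body q) ms /\
    r = Rule (map sigma (cq_head q))
             (map (fun mr => (m_view (fst mr),
                              map (fun z => sigma (snd mr z)) (m_vars (fst mr)))) ms).

Definition heads_unifiable (F : Type) (t1 t2 : list (term F)) : Prop :=
  exists sigma : nat -> term F, map (tsubst sigma) t1 = map (tsubst sigma) t2.

(** Answers of the Datalog query (q_unf, {r}) over the database D, where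
    [ext D V] is the extension of view V on D. *)
Definition answer (F View Val DB : Type) (ext : DB -> View -> list Val -> Prop)
  (D : DB) (r : rule F View) (t : list (gterm F Val)) : Prop :=
  exists th : nat -> Val,
    Forall (fun a => exists vs, map (teval th) (snd a) = map GVal vs /\ ext D (fst a) vs)
           (rbody r) /\
    t = map (teval th) (rhead r).

(* A tuple that is an answer of both rules is a common ground instance of the
   two heads, under two possibly different assignments of database values.
   Since assignments only put database values at variable positions, and a
   database value is never a function term, the two heads must then have the
   same function symbols at the same positions: they coincide once every
   variable is identified with a single one, so they are unifiable. *)
From Stdlib Require Import List.
Import ListNotations.

Fixpoint term_nested_ind {F : Type} (P : term F -> Prop)
  (HVar : forall x, P (TVar x))
  (HFun : forall f ts, Forall P ts -> P (TFun f ts)) (t : term F) : P t :=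
  match t with
  | TVar x => HVar x
  | TFun f ts =>
      HFun f ts
        ((fix all_P (l : list (term F)) : Forall P l :=
            match l with
            | [] => Forall_nil P
            | u :: l' => Forall_cons u (term_nested_ind P HVar HFun u) (all_P l')
            end) ts)
  end.

Lemma map_eq_of_Forall {A B C : Type} {f g : A -> B} {h k : A -> C} {l1 l2 : list A} :
  Forall (fun a => forall b, f a = g b -> h a = k b) l1 ->
  map f l1 = map g l2 -> map h l1 = map k l2.
Proof.
  intros Hall; revert l2.
  induction Hall as [|a l1 Ha _ IH]; intros [|b l2] Heq; simpl in *;
    try discriminate; trivial.
  injection Heq as Hab Hl.
  f_equal; auto.
Qed.

Definition shape {F : Type} : term F -> term F := tsubst (fun _ => TVar 0).

Lemma teval_eq_shape (F Val : Type) (th1 th2 : nat -> Val) (s1 s2 : term F) :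
  teval th1 s1 = teval th2 s2 -> shape s1 = shape s2.
Proof.
  revert s2.
  induction s1 as [x|f ts IH] using term_nested_ind; intros [y|g us] Heq;
    simpl in Heq; try discriminate; trivial.
  injection Heq as <- Hts.
  unfold shape; simpl; f_equal.
  exact (map_eq_of_Forall IH Hts).
Qed.

Lemma map_teval_eq_shape {F Val : Type} (th1 th2 : nat -> Val) (l1 l2 : list (term F)) :
  map (teval th1) l1 = map (teval th2) l2 -> map (@shape F) l1 = map (@shape F) l2.
Proof.
  apply map_eq_of_Forall, Forall_forall.
  intros s1 _ s2; apply teval_eq_shape.
Qed.

Lemma common_answer_heads_unifiable (F View Val DB : Type)
  (ext : DB -> View -> list Val -> Prop) (D : DB) (r1 r2 : rule F View)
  (t : list (gterm F Val)) :
  answer ext D r1 t -> answer ext D r2 t -> heads_unifiable (rhead r1) (rhead r2).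
Proof.
  intros [th1 [_ Ht1]] [th2 [_ Ht2]].
  exists (fun _ => TVar 0).
  apply (map_teval_eq_shape th1 th2).
  rewrite <- Ht1, <- Ht2; reflexivity.
Qed.

Theorem lemma6 (Lc F View Val DB : Type) (ext : DB -> View -> list Val -> Prop)
  (M : mapping Lc F View -> Prop) (HM : forall m, M m -> wf_mapping m)
  (q : cq Lc) (r1 r2 : rule F View) :
  unf_rule M q r1 -> unf_rule M q r2 ->
  ~ heads_unifiable (rhead r1) (rhead r2) ->
  forall (D : DB) (t : list (gterm F Val)),
    ~ (answer ext D r1 t /\ answer ext D r2 t).
Proof.
  (* Disjointness holds for any two rules. *)
  intros _ _ Hnot_unif D t [Hans1 Hans2].
  apply Hnot_unif; eapply common_answer_heads_unifiable; eassumption.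
Qed.
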